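(* Let $\mathbb X$ be a basic space and $\mathcal D=(D,<,\rho)$ a computable partially ordered set. Every partial function in $\mathrm{Max}_{\mathrm{PR}}[\mathbb X\to\mathcal D]$ or in $\mathrm{Min}_{\mathrm{PR}}[\mathbb X\to\mathcal D]$ has a $\Sigma^0_1\wedge\Pi^0_1$ graph and a $\Sigma^0_2$ domain.
   Context: A basic space is a finite non-empty product of sets each of which is $\mathbb N$, $\mathbb Z$, or $A^*$ for some finite alphabet $A$. A computable partially ordered set is a triple $\mathcal D=(D,<,\rho)$ where $\rho:\mathbb N\to D$ is a bijection and $<$ is a strict partial order on $D$ with $\{(m,n):\rho(m)<\rho(n)\}$ computable; a partial function into $D$ is partial computable if its composition with $\rho^{-1}$ is. For a partial $f:\mathbb X\times\mathbb N\to D$ monotone increasing (resp. decreasing) in its second argument on its domain, $\max^{\mathcal D}f$ (resp. $\min^{\mathcal D}f$) is the partial function defined exactly at those $x$ for which $\{f(x,t):t,\ f(x,t)\text{ defined}\}$ is finite and non-empty, with value its maximum (resp. minimum). $\mathrm{Max}_{\mathrm{PR}}[\mathbb X\to\mathcal D]$ (resp. $\mathrm{Min}_{\mathrm{PR}}[\mathbb X\to\mathcal D]$) is the class of all $\max^{\mathcal D}f$ (resp. $\min^{\mathcal D}f$) with $f$ partial computable and monotone increasing (resp. decreasing) in its second argument. A relation $R\subseteq\mathbb X\times D$ is $\Sigma^0_n$, $\Pi^0_n$, or $\Sigma^0_1\wedge\Pi^0_1$ (conjunction of a $\Sigma^0_1$ and a $\Pi^0_1$ relation) if so is $\{(x,n):(x,\rho(n))\in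 R\}\subseteq\mathbb X\times\mathbb N$ in the arithmetical hierarchy. *)

From mathcomp Require Import all_boot.
From mathcomp Require Import ssralg ssrint.
From Stdlib Require List.

Set Implicit Arguments.
Unset Strict Implicit.
Unset Printing Implicit Defensive.

Definition vcons k (x : nat) (v : 'I_k -> nat) : 'I_k.+1 -> nat :=
  fun i => if unlift ord0 i is Some j then v j else x.

Definition vtail k (w : 'I_k.+1 -> nat) : 'I_k -> nat :=
  fun j => w (lift ord0 j).

Definition vsnoc k (v : 'I_k -> nat) (x : nat) : 'I_k.+1 -> nat :=
  fun i => if unlift ord_max i is Some j then v j else x.

Definition vapp m n (u : 'I_m -> nat) (v : 'I_n -> nat) : 'I_(m + n) -> nat :=
  fun i => match split i with inl a => u a | inr b => v b end.

Inductive recf : nat -> Type :=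
| rZero (k : nat) : recf k
| rSucc : recf 1
| rProj (k : nat) (i : 'I_k) : recf k
| rComp (k m : nat) (g : recf m) (hs : 'I_m -> recf k) : recf k
| rPrec (k : nat) (g : recf k) (h : recf k.+2) : recf k.+1   (* prim. rec. on 1st arg *)
| rMu (k : nat) (h : recf k.+1) : recf k.                    (* minimisation on 1st arg *)

Inductive evalr : forall k, recf k -> ('I_k -> nat) -> nat -> Prop :=
| eZero k v : evalr (rZero k) v 0
| eSucc v : evalr rSucc v (v ord0).+1
| eProj k (i : 'I_k) v : evalr (rProj i) v (v i)
| eComp k m (g : recf m) (hs : 'I_m -> recf k) v (ys : 'I_m -> nat) y :
    (forall j, evalr (hs j) v (ys j)) -> evalr g ys y -> evalr (rComp g hs) v y
| ePrec0 k (g : recf k) (h : recf k.+2) (w : 'I_k.+1 -> nat) y :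
    w ord0 = 0 -> evalr g (vtail w) y -> evalr (rPrec g h) w y
| ePrecS k (g : recf k) (h : recf k.+2) (w : 'I_k.+1 -> nat) n z y :
    w ord0 = n.+1 ->
    evalr (rPrec g h) (vcons n (vtail w)) z ->
    evalr h (vcons n (vcons z (vtail w))) y ->
    evalr (rPrec g h) w y
| eMu k (h : recf k.+1) v n (zs : nat -> nat) :
    evalr h (vcons n v) 0 ->
    (forall m, m < n -> zs m <> 0 /\ evalr h (vcons m v) (zs m)) ->
    evalr (rMu h) v n.

Definition comp_pred k (P : ('I_k -> nat) -> Prop) : Prop :=
  exists phi : recf k, forall v,
    (P v -> evalr phi v 1) /\ (~ P v -> evalr phi v 0).

Inductive bcomp := CNat | CInt | CWord of nat.

Definition compT (c : bcomp) : Type :=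
  match c with CNat => nat | CInt => int | CWord a => seq 'I_a end.

(* standard injective (bijective for N, Z and a >= 1) computable codings *)
Definition encC (c : bcomp) : compT c -> nat :=
  match c return compT c -> nat with
  | CNat => fun n => n
  | CInt => fun z => match z with Posz n => n.*2 | Negz n => n.*2.+1 end
  | CWord a => fun w => foldr (fun (s : 'I_a) acc => s.+1 + a * acc) 0 w
  end.

(* a basic space is given by a non-empty list X of components;
   its elements are the tuples below *)
Definition bel (X : seq bcomp) : Type :=
  forall i : 'I_(size X), compT (nth CNat X i).

Definition enc (X : seq bcomp) (x : bel X) : 'I_(size X) -> nat :=
  fun i => encC (x i).

Section Hierarchy.
Local Unset Implicit Arguments.
Variable X : seq bcomp.

Fixpoint Sigma (n j : nat) (P : bel X -> ('I_j -> nat) -> Prop) : Prop :=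
  match n with
  | 0 => exists phi : recf (size X + j), forall x v,
           (P x v -> evalr phi (vapp (enc x) v) 1) /\
           (~ P x v -> evalr phi (vapp (enc x) v) 0)
  | n'.+1 => exists Q : bel X -> ('I_j.+1 -> nat) -> Prop,
           (exists R : bel X -> ('I_j.+1 -> nat) -> Prop, Sigma n' j.+1 R /\ forall x v, Q x v <-> ~ R x v) /\
           (forall x v, P x v <-> exists m, Q x (vsnoc v m))
  end.

Definition Pi (n j : nat) (P : bel X -> ('I_j -> nat) -> Prop) : Prop :=
  exists R, Sigma n j R /\ forall x v, P x v <-> ~ R x v.

Definition Sigma1_and_Pi1 (j : nat) (P : bel X -> ('I_j -> nat) -> Prop) : Prop :=
  exists A B, Sigma 1 j A /\ Pi 1 j B /\ forall x v, P x v <-> A x v /\ B x v.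

Definition pcomp (j : nat) (F : bel X -> ('I_j -> nat) -> nat -> Prop) : Prop :=
  exists phi : recf (size X + j), forall x v y,
    evalr phi (vapp (enc x) v) y <-> F x v y.

End Hierarchy.

Definition strict_po (D : Type) (lt : D -> D -> Prop) : Prop :=
  (forall d, ~ lt d d) /\ (forall a b c, lt a b -> lt b c -> lt a c).

Definition computable_poset (D : Type) (lt : D -> D -> Prop) (rho : nat -> D) :=
  [/\ bijective rho, strict_po lt &
      comp_pred (fun v : 'I_2 -> nat => lt (rho (v ord0)) (rho (v ord_max)))].

Section MaxMin.
Local Unset Implicit Arguments.
Variables (X : seq bcomp) (D : Type) (lt : D -> D -> Prop) (rho : nat -> D).

Definition pcompD (f : bel X -> nat -> option D) : Prop :=
  pcomp X 1 (fun x v y => f x (v ord0) = Some (rho y)).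

Definition mono_incr (f : bel X -> nat -> option D) : Prop :=
  forall x t t' d d', t <= t' -> f x t = Some d -> f x t' = Some d' ->
    d = d' \/ lt d d'.

Definition mono_decr (f : bel X -> nat -> option D) : Prop :=
  forall x t t' d d', t <= t' -> f x t = Some d -> f x t' = Some d' ->
    d' = d \/ lt d' d.

Definition vals (f : bel X -> nat -> option D) (x : bel X) (e : D) : Prop :=
  exists t, f x t = Some e.

Definition finite_set (S : D -> Prop) : Prop :=
  exists l : list D, forall e, S e <-> List.In e l.

Definition is_maxD (f : bel X -> nat -> option D) (g : bel X -> option D) : Prop :=
  forall x,
    (g x <> None <-> (finite_set (vals f x) /\ exists e, vals f x e)) /\
    (forall d, g x = Some d ->
       vals f x d /\ forall e, vals f x e -> e = d \/ lt e d).

Definition is_minD (f : bel X -> nat -> option D) (g : bel X -> option D) : Prop :=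
  forall x,
    (g x <> None <-> (finite_set (vals f x) /\ exists e, vals f x e)) /\
    (forall d, g x = Some d ->
       vals f x d /\ forall e, vals f x e -> d = e \/ lt d e).

Definition MaxPR (g : bel X -> option D) : Prop :=
  exists f, pcompD f /\ mono_incr f /\ is_maxD f g.

Definition MinPR (g : bel X -> option D) : Prop :=
  exists f, pcompD f /\ mono_decr f /\ is_minD f g.

End MaxMin.

From mathcomp Require Import all_boot.
From Stdlib Require Import FunctionalExtensionality Classical ClassicalEpsilon.

Set Implicit Arguments.
Unset Strict Implicit.
Unset Printing Implicit Defensive.

(* Run a program [phi] for [f] with a clock: [stage x s] records the last value
   [f(x, t)], [t < s], that [phi] produces within [s] steps.  Stages are computable
   in [(x, s)] (compiling clocked evaluation of mu-recursive programs into a total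
   program), every stage reports a value of [f x], and by monotonicity every value
   of [f x] is eventually dominated by a stage.  So [max f x = d] iff some stage
   reports [d] (Sigma^0_1) and no stage reports a value not below [d] (Pi^0_1);
   the values are then finite, as all those after the stage reporting [d] equal
   [d].  The domain is the set of [x] having a stage whose value no stage exceeds
   (Sigma^0_2).  Minima are maxima for the dual order. *)

Lemma vcons0 k x (v : 'I_k -> nat) : vcons x v ord0 = x.
Proof. by rewrite /vcons unlift_none. Qed.

Lemma vconsS k x (v : 'I_k -> nat) j : vcons x v (lift ord0 j) = v j.
Proof. by rewrite /vcons liftK. Qed.

Lemma vsnoc_max k (v : 'I_k -> nat) x : vsnoc v x ord_max = x.
Proof. by rewrite /vsnoc unlift_none. Qed.

Lemma vsnocS k (v : 'I_k -> nat) x j : vsnoc v x (lift ord_max j) = v j.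
Proof. by rewrite /vsnoc liftK. Qed.

Lemma vsnoc0 k (v : 'I_k.+1 -> nat) x : vsnoc v x ord0 = v ord0.
Proof.
have -> : ord0 = lift ord_max (ord0 : 'I_k.+1) by apply: val_inj.
by rewrite vsnocS.
Qed.

Lemma vsnoc_nil (v : 'I_0 -> nat) x i : vsnoc v x i = x.
Proof. by rewrite /vsnoc; case: (unlift _ _) => // -[]. Qed.

Lemma vtail_vcons k x (v : 'I_k -> nat) : vtail (vcons x v) = v.
Proof. by apply: functional_extensionality => j; rewrite /vtail vconsS. Qed.

Lemma vcons_vtail k (w : 'I_k.+1 -> nat) : vcons (w ord0) (vtail w) = w.
Proof.
apply: functional_extensionality => i.
by case: (unliftP ord0 i) => [j|] ->; rewrite ?vconsS ?vcons0.
Qed.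

Lemma vsnoc_vcons k x (v : 'I_k -> nat) y :
  vsnoc (vcons x v) y = vcons x (vsnoc v y).
Proof.
apply: functional_extensionality => i.
case: (unliftP ord0 i) => [j|] ->; last by rewrite vsnoc0 !vcons0.
rewrite vconsS; case: (unliftP ord_max j) => [j'|] ->.
  have -> : lift ord0 (lift ord_max j') = lift ord_max (lift ord0 j').
    by apply: val_inj; rewrite /= /bump /= !add1n ltnS leqNgt ltn_ord.
  by rewrite !vsnocS vconsS.
have -> : lift ord0 ord_max = ord_max :> 'I_k.+2 by apply: val_inj.
by rewrite !vsnoc_max.
Qed.

Lemma vapp_lshift m n (u : 'I_m -> nat) (w : 'I_n -> nat) a :
  vapp u w (lshift n a) = u a.
Proof. by rewrite /vapp -[lshift n a]/(unsplit (inl a)) unsplitK. Qed.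

Lemma vapp_rshift m n (u : 'I_m -> nat) (w : 'I_n -> nat) b :
  vapp u w (rshift m b) = w b.
Proof. by rewrite /vapp -[rshift m b]/(unsplit (inr b)) unsplitK. Qed.

Definition fcons T k (x : T) (v : 'I_k -> T) : 'I_k.+1 -> T :=
  fun i => if unlift ord0 i is Some j then v j else x.

Definition fsnoc T k (v : 'I_k -> T) (x : T) : 'I_k.+1 -> T :=
  fun i => if unlift ord_max i is Some j then v j else x.

Definition fnil T : 'I_0 -> T :=
  fun i => False_rect T (Bool.diff_false_true (ltn_ord i)).

Definition vpair (a b : nat) : 'I_2 -> nat := vcons a (vcons b (fnil nat)).

Lemma vpair0 a b : vpair a b ord0 = a.
Proof. exact: vcons0. Qed.

Lemma vpair1 a b : vpair a b ord_max = b.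
Proof.
have -> : ord_max = lift ord0 (ord0 : 'I_1) by apply: val_inj.
by rewrite /vpair vconsS vcons0.
Qed.

(** * Elementary recursive programs *)

Lemma evalr_congr k (phi : recf k) v v' y y' :
  evalr phi v y -> v = v' -> y = y' -> evalr phi v' y'.
Proof. by move=> H <- <-. Qed.

Lemma evalr_proj k (v : 'I_k -> nat) i y : v i = y -> evalr (rProj i) v y.
Proof. by move=> <-; exact: eProj. Qed.

Lemma evalr_fcons k m (h : recf k) (hs : 'I_m -> recf k) v y ys :
  evalr h v y -> (forall j, evalr (hs j) v (ys j)) ->
  forall j, evalr (fcons h hs j) v (vcons y ys j).
Proof. by move=> Hh Hhs j; rewrite /fcons /vcons; case: (unlift ord0 j). Qed.

Lemma evalr_fsnoc k m (h : recf k) (hs : 'I_m -> recf k) v y ys :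
  evalr h v y -> (forall j, evalr (hs j) v (ys j)) ->
  forall j, evalr (fsnoc hs h j) v (vsnoc ys y j).
Proof. by move=> Hh Hhs j; rewrite /fsnoc /vsnoc; case: (unlift ord_max j). Qed.

Lemma evalr_fnil k v (ys : 'I_0 -> nat) j : evalr (fnil (recf k) j) v (ys j).
Proof. by case: j. Qed.

Lemma evalr_prec_seq k (g : recf k) (h : recf k.+2) r (F : nat -> nat) :
  evalr g r (F 0) -> (forall n, evalr h (vcons n (vcons (F n) r)) (F n.+1)) ->
  forall n, evalr (rPrec g h) (vcons n r) (F n).
Proof.
move=> Hg Hh; elim=> [|n IH].
  by apply: ePrec0; rewrite ?vcons0 ?vtail_vcons.
by apply: (ePrecS (n := n) (z := F n)); rewrite ?vcons0 ?vtail_vcons.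
Qed.

Definition ifz (a x y : nat) := if a is 0 then x else y.

Definition ifz_prog : recf 3 := rPrec (rProj (ord0 : 'I_2)) (rProj (ord_max : 'I_4)).

Lemma evalr_ifz_prog a x y : evalr ifz_prog (vcons a (vpair x y)) (ifz a x y).
Proof.
apply: (evalr_prec_seq (F := fun a => ifz a x y)) => [|n].
  by apply: evalr_proj; rewrite vpair0.
apply: evalr_proj.
have -> : ord_max = lift ord0 (lift ord0 (ord_max : 'I_2)) by apply: val_inj.
by rewrite !vconsS vpair1.
Qed.

Definition pred_prog : recf 1 := rPrec (rZero 0) (rProj (ord0 : 'I_2)).

Lemma evalr_pred_prog a : evalr pred_prog (vcons a (fnil nat)) a.-1.
Proof.
apply: (evalr_prec_seq (F := predn)) => [|n]; first exact: eZero.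
by apply: evalr_proj; rewrite vcons0.
Qed.

(* [subn_prog] maps [(b, a)] to [a - b], by recursion on [b]. *)
Definition subn_prog : recf 2 :=
  rPrec (rProj ord0) (rComp pred_prog (fcons (rProj (lift ord0 ord0 : 'I_3)) (fnil _))).

Lemma evalr_subn_prog b a : evalr subn_prog (vpair b a) (a - b).
Proof.
apply: (evalr_prec_seq (F := subn a)) => [|n].
  by apply: evalr_proj; rewrite subn0 vcons0.
apply: (eComp (ys := vcons (a - n) (fnil nat))); last by rewrite subnS; exact: evalr_pred_prog.
apply: evalr_fcons => [|j]; last exact: evalr_fnil.
by apply: evalr_proj; rewrite vconsS vcons0.
Qed.

Section Combinators.
Variable k : nat.

Definition rsucc (e : recf k) : recf k := rComp rSucc (fcons e (fnil _)).
Fixpoint rconst n : recf k := if n is n'.+1 then rsucc (rconst n') else rZero k.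
Definition rpred (e : recf k) : recf k := rComp pred_prog (fcons e (fnil _)).
Definition rifz (a x y : recf k) : recf k :=
  rComp ifz_prog (fcons a (fcons x (fcons y (fnil _)))).
Definition rsubn (b a : recf k) : recf k := rComp subn_prog (fcons b (fcons a (fnil _))).
Definition reqn (a b : recf k) : recf k :=
  rifz (rsubn b a) (rifz (rsubn a b) (rconst 1) (rconst 0)) (rconst 0).
Definition rnot (a : recf k) : recf k := rifz a (rconst 1) (rconst 0).
Definition rand (a b : recf k) : recf k := rifz a (rconst 0) b.
Definition ror (a b : recf k) : recf k := rifz a b (rconst 1).

Fixpoint rall_pos m : ('I_m -> recf k) -> recf k :=
  if m is m'.+1 then fun hs => rand (hs ord0) (rall_pos (fun j => hs (lift ord0 j)))
  else fun _ => rconst 1.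

Variable v : 'I_k -> nat.

Lemma evalr_rsucc e a : evalr e v a -> evalr (rsucc e) v a.+1.
Proof.
move=> He; apply: (eComp (ys := vcons a (fnil nat))).
  by apply: evalr_fcons => //; exact: evalr_fnil.
by rewrite -{2}[a](vcons0 a (fnil nat)); exact: eSucc.
Qed.

Lemma evalr_rconst n : evalr (rconst n) v n.
Proof. by elim: n => [|n IH]; [exact: eZero | exact: evalr_rsucc]. Qed.

Lemma evalr_rpred e a : evalr e v a -> evalr (rpred e) v a.-1.
Proof.
move=> He; apply: (eComp (ys := vcons a (fnil nat))); last exact: evalr_pred_prog.
by apply: evalr_fcons => //; exact: evalr_fnil.
Qed.

Lemma evalr_rifz ea ex ey a x y :
  evalr ea v a -> evalr ex v x -> evalr ey v y -> evalr (rifz ea ex ey) v (ifz a x y).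
Proof.
move=> Ha Hx Hy; apply: (eComp (ys := vcons a (vpair x y))); last exact: evalr_ifz_prog.
by do 3 apply: evalr_fcons => //; exact: evalr_fnil.
Qed.

Lemma evalr_rsubn eb ea b a : evalr eb v b -> evalr ea v a -> evalr (rsubn eb ea) v (a - b).
Proof.
move=> Hb Ha; apply: (eComp (ys := vpair b a)); last exact: evalr_subn_prog.
by do 2 apply: evalr_fcons => //; exact: evalr_fnil.
Qed.

Lemma evalr_reqn ea eb a b : evalr ea v a -> evalr eb v b -> evalr (reqn ea eb) v (a == b).
Proof.
move=> Ha Hb; apply: evalr_congr.
- apply: evalr_rifz; first exact: evalr_rsubn Hb Ha.
    apply: evalr_rifz; [exact: evalr_rsubn Ha Hb | exact: evalr_rconst | exact: evalr_rconst].
  exact: evalr_rconst.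
- by [].
- by rewrite /ifz eqn_leq -!subn_eq0; case: (a - b); case: (b - a).
Qed.

Lemma evalr_rnot ea a : evalr ea v a -> evalr (rnot ea) v (a == 0).
Proof.
move=> Ha; apply: evalr_congr (evalr_rifz Ha (evalr_rconst 1) (evalr_rconst 0)) _ _ => //.
by case: a {Ha}.
Qed.

Lemma evalr_rand ea eb a (b : bool) :
  evalr ea v a -> evalr eb v b -> evalr (rand ea eb) v ((a != 0) && b).
Proof.
move=> Ha Hb; apply: evalr_congr (evalr_rifz Ha (evalr_rconst 0) Hb) _ _ => //.
by case: a {Ha}.
Qed.

Lemma evalr_ror ea eb (a b : bool) :
  evalr ea v a -> evalr eb v b -> evalr (ror ea eb) v (a || b).
Proof.
move=> Ha Hb; apply: evalr_congr (evalr_rifz Ha Hb (evalr_rconst 1)) _ _ => //.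
by case: a {Ha}.
Qed.

Fixpoint all_pos m : ('I_m -> nat) -> bool :=
  if m is m'.+1 then fun cs => (cs ord0 != 0) && all_pos (fun j => cs (lift ord0 j))
  else fun _ => true.

Lemma all_posP m (cs : 'I_m -> nat) : reflect (forall j, cs j <> 0) (all_pos cs).
Proof.
elim: m cs => [|m IH] cs /=; first by left; case.
apply: (iffP andP) => [[/eqP H0 /IH Hs] j|H].
  by case: (unliftP ord0 j) => [j'|] ->.
by split; [apply/eqP | apply/IH => j].
Qed.

Lemma evalr_rall_pos m (hs : 'I_m -> recf k) cs :
  (forall j, evalr (hs j) v (cs j)) -> evalr (rall_pos hs) v (all_pos cs).
Proof.
elim: m hs cs => [|m IH] hs cs Hs; first exact: evalr_rconst.
by apply: evalr_rand => //; apply: IH.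
Qed.

End Combinators.

Arguments rconst : simpl never.

(** * Evaluation with a clock *)

Definition eventually (P : nat -> Prop) := exists s0, forall s, s0 <= s -> P s.

Lemma eventually_impl (P Q : nat -> Prop) :
  (forall s, P s -> Q s) -> eventually P -> eventually Q.
Proof. by move=> PQ [s0 HP]; exists s0 => s /HP /PQ. Qed.

Lemma eventually_and P Q : eventually P -> eventually Q -> eventually (fun s => P s /\ Q s).
Proof.
move=> [s1 H1] [s2 H2]; exists (maxn s1 s2) => s; rewrite geq_max => /andP[h1 h2].
by split; [apply: H1 | apply: H2].
Qed.

Lemma eventually_ge n : eventually (leq n).
Proof. by exists n. Qed.

Lemma eventually_forall_ord m (P : 'I_m -> nat -> Prop) :
  (forall j, eventually (P j)) -> eventually (fun s => forall j, P j s).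
Proof.
elim: m P => [|m IH] P H; first by exists 0 => s _ [].
apply: eventually_impl (eventually_and (H ord0) (IH _ (fun j => H (lift ord0 j)))).
by move=> s [H0 Hs] j; case: (unliftP ord0 j) => [j'|] ->.
Qed.

Lemma eventually_forall_lt n (P : nat -> nat -> Prop) :
  (forall m, m < n -> eventually (P m)) -> eventually (fun s => forall m, m < n -> P m s).
Proof.
elim: n => [|n IH] H; first by exists 0.
apply: eventually_impl (eventually_and (H n (ltnSn n)) (IH (fun m hm => H m (ltnW hm)))).
by move=> s [Hn Hs] m; rewrite ltnS leq_eqVlt => /predU1P[->|/Hs].
Qed.

Fixpoint prec_iter (G : nat) (H : nat -> nat -> nat) n :=
  if n is i.+1 then (let c := prec_iter G H i in ifz c 0 (H i c.-1)) else G.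

(* Search states: [0] (aborted), [1] (still searching), [n.+2] (found [n]);
   [mu_step c i] is the verdict on candidate [i] from its clocked value [c]. *)
Fixpoint mu_iter (T : nat -> nat) n :=
  if n is i.+1 then (let r := mu_iter T i in ifz r 0 (ifz r.-1 (T i) r)) else 1.

Definition mu_step (c i : nat) := ifz c 0 (ifz c.-1 i.+2 1).

(* [ceval s phi v] is [y.+1] if [phi] yields [y] on [v] when every search is
   cut off after [s] candidates, and [0] otherwise. *)
Fixpoint ceval (s : nat) k (phi : recf k) : ('I_k -> nat) -> nat :=
  match phi in recf k return ('I_k -> nat) -> nat with
  | rZero _ => fun _ => 1
  | rSucc => fun v => (v ord0).+2
  | rProj _ i => fun v => (v i).+1
  | rComp _ _ g hs => fun v =>
      ifz (all_pos (fun j => ceval s (hs j) v)) 0 (ceval s g (fun j => (ceval s (hs j) v).-1))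
  | rPrec _ g h => fun w =>
      prec_iter (ceval s g (vtail w)) (fun i z => ceval s h (vcons i (vcons z (vtail w))))
                (w ord0)
  | rMu _ h => fun v => (mu_iter (fun i => mu_step (ceval s h (vcons i v)) i) s).-1
  end.

Section MuIter.
Variable T : nat -> nat.

Lemma mu_iter_searching n : mu_iter T n = 1 <-> forall m, m < n -> T m = 1.
Proof.
elim: n => [|n IH] //=; split.
  case E: (mu_iter T n) => [|[|r]] //= Tn m.
  by rewrite ltnS leq_eqVlt => /predU1P[->|/(proj1 IH E)].
by move=> Tlt; rewrite (proj2 IH) ?Tlt // => m /ltnW /Tlt.
Qed.

Lemma mu_iter_found i n :
  (forall i, [\/ T i = 0, T i = 1 | T i = i.+2]) -> mu_iter T i = n.+2 ->
  [/\ n < i, T n = n.+2 & forall m, m < n -> T m = 1].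
Proof.
move=> T_cases; elim: i => [|i IH] //=.
case E: (mu_iter T i) => [|[|r]] //= H; last first.
  by have [? ? ?] := IH (etrans E H); split => //; exact: ltnW.
have ni : n = i by move: H; case: (T_cases i) => -> // [].
by subst n; split => //; exact/mu_iter_searching.
Qed.

Lemma mu_iter_eq n : (forall m, m < n -> T m = 1) -> T n = n.+2 ->
  forall i, n < i -> mu_iter T i = n.+2.
Proof.
move=> /mu_iter_searching Tlt Tn.
by elim=> [|i IH] //; rewrite ltnS leq_eqVlt => /predU1P[<-|/IH /= ->] //=; rewrite Tlt /= Tn.
Qed.

End MuIter.

Lemma mu_step_cases c i : [\/ mu_step c i = 0, mu_step c i = 1 | mu_step c i = i.+2].
Proof. by case: c => [|[|c]]; [apply: Or31 | apply: Or33 | apply: Or32]. Qed.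

Lemma mu_step_found c i : mu_step c i = i.+2 -> c = 1.
Proof. by case: c => [|[|c]] //= /eqP. Qed.

Lemma mu_step_continue c i : mu_step c i = 1 -> 1 < c.
Proof. by case: c => [|[|c]]. Qed.

Lemma ceval_sound k (phi : recf k) s v y : ceval s phi v = y.+1 -> evalr phi v y.
Proof.
elim: phi v y => {k}.
- by move=> k v y [<-]; exact: eZero.
- by move=> v y [<-]; exact: eSucc.
- by move=> k i v y [<-]; exact: eProj.
- move=> k m g IHg hs IHhs v y /=.
  case: (all_posP (fun j => ceval s (hs j) v)) => //= Hpos Hg.
  apply: (eComp (ys := fun j => (ceval s (hs j) v).-1)); last exact: IHg.
  by move=> j; apply: IHhs; rewrite prednK // lt0n; apply/eqP.
- move=> k g IHg h IHh w y /=.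
  rewrite -[w in evalr _ w](vcons_vtail w).
  elim: (w ord0) y => [|n IHn] y /=.
    by move=> Hg; apply: ePrec0; rewrite ?vcons0 ?vtail_vcons //; exact: IHg.
  case E: (prec_iter _ _ n) => [|z] //= Hh.
  apply: (ePrecS (n := n) (z := z)); rewrite ?vcons0 ?vtail_vcons //.
    exact: IHn E.
  exact: IHh.
- move=> k h IHh v y /=; set T := fun i => _.
  move=> Hm; have {}Hm : mu_iter T s = y.+2 by move: Hm; case: (mu_iter T s) => [|[|r]] //= ->.
  have [_ Ty Tlt] := mu_iter_found (fun i => mu_step_cases _ i) Hm.
  apply: (eMu (zs := fun m => (ceval s h (vcons m v)).-1)).
    by apply: IHh; exact: mu_step_found Ty.
  move=> m /Tlt /mu_step_continue.
  by case: (ceval s h (vcons m v)) (IHh (vcons m v)) => [|[|c]] // IH _; split => //; exact: IH.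
Qed.

Lemma ceval_comp_complete k m (g : recf m) (hs : 'I_m -> recf k) v ys y :
  (forall j, eventually (fun s => ceval s (hs j) v = (ys j).+1)) ->
  eventually (fun s => ceval s g ys = y.+1) ->
  eventually (fun s => ceval s (rComp g hs) v = y.+1).
Proof.
move=> Hhs Hg; apply: eventually_impl (eventually_and (eventually_forall_ord Hhs) Hg).
move=> s [Ehs Eg] /=.
have -> : (fun j => (ceval s (hs j) v).-1) = ys.
  by apply: functional_extensionality => j; rewrite Ehs.
by case: all_posP => [//|[j]]; rewrite Ehs.
Qed.

Lemma ceval_mu_complete k (h : recf k.+1) v n (zs : nat -> nat) :
  eventually (fun s => ceval s h (vcons n v) = 1) ->
  (forall m, m < n -> zs m <> 0 /\ eventually (fun s => ceval s h (vcons m v) = (zs m).+1)) ->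
  eventually (fun s => ceval s (rMu h) v = n.+1).
Proof.
move=> Hn Hlt.
have Hall := eventually_forall_lt (P := fun m s => ceval s h (vcons m v) = (zs m).+1)
                                  (fun m hm => proj2 (Hlt m hm)).
apply: eventually_impl (eventually_and (eventually_and Hn Hall) (eventually_ge n.+1)).
move=> s [[En Em] ns] /=; rewrite (@mu_iter_eq _ n) //; last by rewrite /mu_step En.
by move=> m hm; rewrite /mu_step Em //=; case: (Hlt m hm); case: (zs m).
Qed.

Fixpoint ceval_complete k (phi : recf k) v y (H : evalr phi v y) {struct H} :
  eventually (fun s => ceval s phi v = y.+1).
Proof.
case: H => {k phi v y}.
- by move=> k v; exists 0.
- by move=> v; exists 0.
- by move=> k i v; exists 0.
- move=> k m g hs v ys y Hs Hg.
  apply: ceval_comp_complete (ceval_complete _ _ _ _ Hg) => j.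
  exact: ceval_complete _ _ _ _ (Hs j).
- move=> k g h w y Hw Hg.
  by apply: eventually_impl (ceval_complete _ _ _ _ Hg) => s /=; rewrite Hw.
- move=> k g h w n z y Hw Hr Hh.
  apply: eventually_impl (eventually_and (ceval_complete _ _ _ _ Hr) (ceval_complete _ _ _ _ Hh)).
  by move=> s [] /=; rewrite Hw vtail_vcons vcons0 /= => -> /=.
- move=> k h v n zs Hn Hlt.
  apply: ceval_mu_complete (ceval_complete _ _ _ _ Hn) _ => m hm.
  by case: (Hlt m hm) => nz Hm; split; [exact: nz | exact: ceval_complete _ _ _ _ Hm].
Qed.

Definition clocked k (ch : recf k.+1) (phi : recf k) :=
  forall s v, evalr ch (vsnoc v s) (ceval s phi v).

Definition clock_comp k m (cg : recf m.+1) (chs : 'I_m -> recf k.+1) : recf k.+1 :=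
  rifz (rall_pos chs) (rconst _ 0)
       (rComp cg (fsnoc (fun j => rpred (chs j)) (rProj ord_max))).

(* The loop bodies of [clock_prec] and [clock_mu] receive [(i, state, args, clock)]. *)
Definition clock_prec k (cg : recf k.+1) (ch : recf k.+3) : recf k.+2 :=
  rPrec cg (rifz (rProj (lift ord0 ord0)) (rconst _ 0)
    (rComp ch (fsnoc (fcons (rProj ord0) (fcons (rpred (rProj (lift ord0 ord0)))
                       (fun j => rProj (lift ord0 (lift ord0 (lift ord_max j))))))
                     (rProj (lift ord0 (lift ord0 ord_max)))))).

Definition mu_probe k (ch : recf k.+2) : recf k.+3 :=
  rComp ch (fsnoc (fcons (rProj ord0) (fun j => rProj (lift ord0 (lift ord0 (lift ord_max j)))))
                  (rProj (lift ord0 (lift ord0 ord_max)))).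

Definition clock_mu k (ch : recf k.+2) : recf k.+1 :=
  let c := mu_probe ch in
  let r := rProj (lift ord0 ord0) in
  let step := rifz c (rconst _ 0) (rifz (rpred c) (rsucc (rsucc (rProj ord0))) (rconst _ 1)) in
  rpred (rComp (rPrec (rconst _ 1) (rifz r (rconst _ 0) (rifz (rpred r) step r)))
               (fcons (rProj ord_max) (fun j => rProj j))).

Fixpoint rclock k (phi : recf k) : recf k.+1 :=
  match phi in recf k return recf k.+1 with
  | rZero k => rconst _ 1
  | rSucc => rsucc (rsucc (rProj (lift ord_max ord0)))
  | rProj k i => rsucc (rProj (lift ord_max i))
  | rComp k m g hs => clock_comp (rclock g) (fun j => rclock (hs j))
  | rPrec k g h => clock_prec (rclock g) (rclock h)
  | rMu k h => clock_mu (rclock h)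
  end.

Lemma clocked_comp k m (g : recf m) (hs : 'I_m -> recf k) cg chs :
  clocked cg g -> (forall j, clocked (chs j) (hs j)) ->
  clocked (clock_comp cg chs) (rComp g hs).
Proof.
move=> Hg Hhs s v; rewrite /clock_comp /=.
apply: evalr_rifz; [by apply: evalr_rall_pos => j; apply: Hhs | exact: evalr_rconst |].
apply: (eComp (ys := vsnoc (fun j => (ceval s (hs j) v).-1) s)); last exact: Hg.
apply: evalr_fsnoc => [|j]; first exact/evalr_proj/vsnoc_max.
by apply: evalr_rpred; apply: Hhs.
Qed.

Lemma clocked_prec k (g : recf k) (h : recf k.+2) cg ch :
  clocked cg g -> clocked ch h -> clocked (clock_prec cg ch) (rPrec g h).
Proof.
move=> Hg Hh s w; rewrite /clock_prec /=.
rewrite -[in vsnoc w s](vcons_vtail w) vsnoc_vcons.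
apply: evalr_prec_seq => [|n]; first exact: Hg.
apply: evalr_rifz; [by apply: evalr_proj; rewrite vconsS vcons0 | exact: evalr_rconst |].
set c := prec_iter _ _ n.
apply: (eComp (ys := vsnoc (vcons n (vcons c.-1 (vtail w))) s)); last exact: Hh.
apply: evalr_fsnoc; first by apply: evalr_proj; rewrite !vconsS vsnoc_max.
apply: evalr_fcons; first by apply: evalr_proj; rewrite vcons0.
apply: evalr_fcons; first by apply/evalr_rpred/evalr_proj; rewrite vconsS vcons0.
by move=> j; apply: evalr_proj; rewrite !vconsS vsnocS.
Qed.

Lemma evalr_mu_probe k (h : recf k.+1) ch s v i r :
  clocked ch h -> evalr (mu_probe ch) (vcons i (vcons r (vsnoc v s))) (ceval s h (vcons i v)).
Proof.
move=> Hh; apply: (eComp (ys := vsnoc (vcons i v) s)); last exact: Hh.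
apply: evalr_fsnoc; first by apply: evalr_proj; rewrite !vconsS vsnoc_max.
apply: evalr_fcons; first by apply: evalr_proj; rewrite vcons0.
by move=> j; apply: evalr_proj; rewrite !vconsS vsnocS.
Qed.

Lemma clocked_mu k (h : recf k.+1) ch : clocked ch h -> clocked (clock_mu ch) (rMu h).
Proof.
move=> Hh s v; rewrite /clock_mu /=; apply: evalr_rpred.
set T := fun i => mu_step _ i.
apply: (eComp (ys := vcons s (vsnoc v s))).
  apply: evalr_fcons; first by apply: evalr_proj; rewrite vsnoc_max.
  by move=> j; exact: eProj.
apply: (evalr_prec_seq (F := mu_iter T)) => [|n]; first exact: evalr_rconst.
have Hr : evalr (rProj (lift ord0 ord0)) (vcons n (vcons (mu_iter T n) (vsnoc v s)))
                (mu_iter T n) by apply: evalr_proj; rewrite vconsS vcons0.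
have Hc := evalr_mu_probe s v n (mu_iter T n) Hh.
apply: evalr_rifz; [exact: Hr | exact: evalr_rconst |].
apply: evalr_rifz; [exact: evalr_rpred Hr | | exact: Hr].
apply: evalr_rifz; [exact: Hc | exact: evalr_rconst |].
apply: evalr_rifz; [exact: evalr_rpred Hc | | exact: evalr_rconst].
by apply/evalr_rsucc/evalr_rsucc/evalr_proj; rewrite vcons0.
Qed.

Lemma clocked_rclock k (phi : recf k) : clocked (rclock phi) phi.
Proof.
elim: phi => {k} [k | | k i | k m g IHg hs IHhs | k g IHg h IHh | k h IHh] s v /=.
- exact: evalr_rconst.
- by apply/evalr_rsucc/evalr_rsucc/evalr_proj; rewrite vsnocS.
- by apply/evalr_rsucc/evalr_proj; rewrite vsnocS.
- exact: clocked_comp.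
- exact: clocked_prec.
- exact: clocked_mu.
Qed.

(** * Stages *)

Fixpoint last_pos (e : nat -> nat) n :=
  if n is i.+1 then ifz (e i) (last_pos e i) (e i) else 0.

Lemma last_pos_attained e n c : last_pos e n = c.+1 -> exists2 t, t < n & e t = c.+1.
Proof.
elim: n => [|n IH] //=; case E: (e n) => [|d] /=; last by move=> <-; exists n.
by move=> /IH[t tn et]; exists t => //; exact: ltnW.
Qed.

Lemma last_pos_ge e n t0 : e t0 <> 0 -> t0 < n ->
  exists t, [/\ t0 <= t, e t <> 0 & last_pos e n = e t].
Proof.
move=> et0; elim: n => [|n IH] //; rewrite ltnS leq_eqVlt => /predU1P[<-|t0n] /=.
  by exists t0; split => //; case: (e t0) et0.
case E: (e n) => [|c] /=; first exact: IH.
by exists n; rewrite E; split => //; exact: ltnW.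
Qed.

Section Stage.
Variables (k : nat) (phi : recf (k + 1)).

Definition trial (u : 'I_k -> nat) s t := ceval s phi (vapp u (fun _ => t)).

(* [stage u s] is [y.+1] for the last [t < s] on which [phi] answers [y] within
   clock [s], and [0] if there is none. *)
Definition stage u s := last_pos (trial u s) s.

(* The arguments of [trial_prog] are [(t, state, u, s)]. *)
Definition trial_prog : recf k.+3 :=
  rComp (rclock phi)
    (fsnoc (fun j : 'I_(k + 1) => match split j with
              | inl a => rProj (lift ord0 (lift ord0 (lift ord_max a)))
              | inr _ => rProj ord0 end)
           (rProj (lift ord0 (lift ord0 ord_max)))).

Definition stage_prog : recf k.+1 :=
  rComp (rPrec (rconst _ 0) (rifz trial_prog (rProj (lift ord0 ord0)) trial_prog))
        (fcons (rProj ord_max) (fun j => rProj j)).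

Lemma evalr_trial_prog u s t r :
  evalr trial_prog (vcons t (vcons r (vsnoc u s))) (trial u s t).
Proof.
apply: (eComp (ys := vsnoc (vapp u (fun _ => t)) s)); last exact: clocked_rclock.
apply: evalr_fsnoc; first by apply: evalr_proj; rewrite !vconsS vsnoc_max.
move=> j; rewrite /vapp; case: (split j) => [a|b]; apply: evalr_proj.
  by rewrite !vconsS vsnocS.
by rewrite vcons0.
Qed.

Lemma evalr_stage_prog u s : evalr stage_prog (vsnoc u s) (stage u s).
Proof.
apply: (eComp (ys := vcons s (vsnoc u s))).
  apply: evalr_fcons; first by apply: evalr_proj; rewrite vsnoc_max.
  by move=> j; exact: eProj.
apply: (evalr_prec_seq (F := last_pos (trial u s))) => [|n]; first exact: evalr_rconst.
apply: evalr_rifz; [exact: evalr_trial_prog | | exact: evalr_trial_prog].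
by apply: evalr_proj; rewrite vconsS vcons0.
Qed.

End Stage.

Section Hierarchy.
Variable X : seq bcomp.

Lemma Sigma0_program j (R : bel X -> ('I_j -> nat) -> Prop) (p : recf (size X + j))
    (b : bel X -> ('I_j -> nat) -> bool) :
  (forall x w, evalr p (vapp (enc x) w) (b x w)) -> (forall x w, R x w <-> b x w) ->
  Sigma X 0 j R.
Proof.
move=> Hp HR; exists p => x w; split => [/HR bxw|nR].
  by move: (Hp x w); rewrite bxw.
case E: (b x w) (Hp x w) => ev; last exact: ev.
by case: nR; apply/HR; rewrite E.
Qed.

Lemma Sigma0_Pi0 j (R : bel X -> ('I_j -> nat) -> Prop) : Sigma X 0 j R -> Pi X 0 j R.
Proof.
move=> [p Hp]; exists (fun x w => ~ R x w); split; last by move=> x w; split => [r /(_ r)|/NNPP].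
exists (rnot p) => x w; split => HR.
  exact: evalr_rnot (proj2 (Hp x w) HR).
exact: evalr_rnot (proj1 (Hp x w) (NNPP _ HR)).
Qed.

Lemma Sigma_succ n j (P : bel X -> ('I_j -> nat) -> Prop) Q :
  Pi X n j.+1 Q -> (forall x v, P x v <-> exists m, Q x (vsnoc v m)) -> Sigma X n.+1 j P.
Proof. by move=> HQ HP; exists Q. Qed.

Lemma Pi_succ n j (P : bel X -> ('I_j -> nat) -> Prop) Q :
  Sigma X n j.+1 Q -> (forall x v, P x v <-> forall m, Q x (vsnoc v m)) -> Pi X n.+1 j P.
Proof.
move=> HQ HP; exists (fun x v => exists m, ~ Q x (vsnoc v m)); split.
  by apply: (Sigma_succ (Q := fun x w => ~ Q x w)) => //; exists Q.
move=> x v; rewrite HP; split => [H [m]|H m]; first exact.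
by apply: NNPP => Hm; apply: H; exists m.
Qed.

End Hierarchy.

(** * Graph and domain of [max f] *)

Section MaxGraph.
Variables (X : seq bcomp) (D : Type) (lt : D -> D -> Prop) (rho : nat -> D).
Hypotheses (rho_bij : bijective rho) (lt_po : strict_po lt).
Variables (f : bel X -> nat -> option D) (g : bel X -> option D).
Hypotheses (f_mono : mono_incr X D lt f) (g_max : is_maxD X D lt f g).
Variable phi : recf (size X + 1).
Hypothesis phi_f : forall x v y, evalr phi (vapp (enc x) v) y <-> f x (v ord0) = Some (rho y).
Variable psi : recf 2.
Hypothesis psi_lt : forall v : 'I_2 -> nat,
  (lt (rho (v ord0)) (rho (v ord_max)) -> evalr psi v 1) /\
  (~ lt (rho (v ord0)) (rho (v ord_max)) -> evalr psi v 0).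

Definition lte a b := a = b \/ lt a b.

Lemma lte_trans a b c : lte a b -> lte b c -> lte a c.
Proof.
case: lt_po => _ lt_trans [->|ab] [<-|bc]; [left | right | right | right] => //.
exact: lt_trans bc.
Qed.

Lemma lte_anti a b : lte a b -> lte b a -> a = b.
Proof. by case: lt_po => lt_irr lt_trans [->|ab] // [->|/(lt_trans _ _ _ ab)/lt_irr]. Qed.

Lemma rho_onto d : exists n, d = rho n.
Proof. by case: rho_bij => r _ rK; exists (r d). Qed.

Definition stage_at x s := stage phi (enc x) s.

(* A stage value [s] is [0] (no answer yet) or codes the value [rho s.-1]. *)
Definition stage_le s n := s = 0 \/ lte (rho s.-1) (rho n).

Lemma trial_val x s t y : trial phi (enc x) s t = y.+1 -> f x t = Some (rho y).
Proof. by move=> /ceval_sound /phi_f. Qed.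

Lemma trial_eventually x t y :
  f x t = Some (rho y) -> eventually (fun s => trial phi (enc x) s t = y.+1).
Proof. by move=> /(phi_f x (fun _ => t)) /ceval_complete. Qed.

Lemma stage_val x s c : stage_at x s = c.+1 -> vals X D f x (rho c).
Proof. by move=> /last_pos_attained[t _ /trial_val]; exists t. Qed.

Lemma val_le_stage x t y : f x t = Some (rho y) ->
  exists s c, stage_at x s = c.+1 /\ lte (rho y) (rho c).
Proof.
move=> fxt; have [s0 Hs0] := trial_eventually fxt.
pose s := maxn s0 t.+1.
have Et : trial phi (enc x) s t = y.+1 by apply: Hs0; exact: leq_maxl.
have [|t' [tt' /eqP Et' Es]] := last_pos_ge (_ : trial phi (enc x) s t <> 0) (leq_maxr s0 t.+1).
  by rewrite Et.
rewrite -lt0n in Et'; rewrite -(prednK Et') in Es.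
exists s, (trial phi (enc x) s t').-1; split => //.
by apply: f_mono tt' fxt _; apply: trial_val; rewrite prednK.
Qed.

Lemma stages_le_vals x n : (forall s, stage_le (stage_at x s) n) ->
  forall e, vals X D f x e -> lte e (rho n).
Proof.
move=> Hle e [t]; have [y ->] := rho_onto e => /val_le_stage[s [c [Hs Hc]]].
by apply: lte_trans Hc _; case: (Hle s); rewrite Hs.
Qed.

Fixpoint vals_upto x n : list D :=
  if n is t.+1 then (if f x t is Some e then e :: vals_upto x t else vals_upto x t) else nil.

Lemma vals_uptoP x n e : List.In e (vals_upto x n) <-> exists2 t, t < n & f x t = Some e.
Proof.
elim: n => [|n IH] /=; first by split=> // -[].
split.
  case E: (f x n) => [e'|]; [case=> [<-|/IH[t tn ?]] | move=> /IH[t tn ?]].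
  - by exists n.
  - by exists t => //; exact: ltnW.
  - by exists t => //; exact: ltnW.
move=> [t]; rewrite ltnS leq_eqVlt => /predU1P[-> -> | tn ft]; first by left.
by case: (f x n) => [e'|]; [right|]; apply/IH; exists t.
Qed.

(* All values after [t0] equal [d] by monotonicity, so only those before [t0] remain. *)
Lemma vals_finite x t0 d : f x t0 = Some d ->
  (forall e, vals X D f x e -> lte e d) -> finite_set D (vals X D f x).
Proof.
move=> ft0 Hle; exists (d :: vals_upto x t0) => e; split => /=.
  move=> [t ft]; case: (leqP t0 t) => ht; last by right; apply/vals_uptoP; exists t.
  by left; apply: lte_anti (f_mono ht ft0 ft) (Hle e _); exists t.
by case=> [<-|/vals_uptoP[t _ ft]]; [exists t0 | exists t].
Qed.

Lemma graph_stages x n : g x = Some (rho n) <->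
  (exists s, stage_at x s = n.+1) /\ (forall s, stage_le (stage_at x s) n).
Proof.
have [Hdom Hval] := g_max x; split.
  move=> gx; have [[t0 ft0] Hle] := Hval _ gx; split.
    have [s [c [Hs Hc]]] := val_le_stage ft0.
    exists s; rewrite Hs; congr _.+1; apply: (bij_inj rho_bij).
    exact: lte_anti (Hle _ (stage_val Hs)) Hc.
  move=> s; case E: (stage_at x s) => [|c]; [by left | right].
  exact: Hle _ (stage_val E).
move=> [[s Hs] /stages_le_vals Hle]; have [t0 ft0] := stage_val Hs.
have : g x <> None by apply/Hdom; split; [exact: vals_finite ft0 Hle | exists (rho n), t0].
case E: (g x) => [d|] // _; have [vd dle] := Hval d E.
by congr Some; apply: lte_anti (Hle d vd) (dle _ _); exists t0.
Qed.

Lemma domain_stages x : g x <> None <->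
  exists s, stage_at x s <> 0 /\ forall s', stage_le (stage_at x s') (stage_at x s).-1.
Proof.
split.
  case E: (g x) => [d|] // _; have [n en] := rho_onto d; rewrite en in E.
  have [[s Hs] Hle] := proj1 (graph_stages x n) E.
  by exists s; rewrite Hs.
move=> [s [Hs Hle]]; rewrite (proj2 (graph_stages x (stage_at x s).-1)) //.
by split => //; exists s; rewrite prednK // lt0n; apply/eqP.
Qed.

Definition ltb a b : bool :=
  if excluded_middle_informative (lt (rho a) (rho b)) then true else false.

Lemma ltbP a b : reflect (lt (rho a) (rho b)) (ltb a b).
Proof. by rewrite /ltb; case: excluded_middle_informative => H; constructor. Qed.

Definition stage_leb s n := [|| s == 0, s.-1 == n | ltb s.-1 n].

Lemma stage_lebP s n : stage_leb s n <-> stage_le s n.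
Proof.
rewrite /stage_leb /stage_le /lte; split.
  by case/or3P => [/eqP|/eqP ->|/ltbP]; auto.
by case=> [->|[/(bij_inj rho_bij) ->|/ltbP ->]] //; rewrite ?eqxx ?orbT.
Qed.

Local Notation K := (size X).

Definition arg0 : recf (K + 2) := rProj (rshift K ord0).
Definition arg1 : recf (K + 2) := rProj (rshift K ord_max).
Definition rstage (e : recf (K + 2)) : recf (K + 2) :=
  rComp (stage_prog phi) (fsnoc (fun a => rProj (lshift 2 a)) e).
Definition rltb (a b : recf (K + 2)) : recf (K + 2) := rComp psi (fcons a (fcons b (fnil _))).
Definition rstage_le (es en : recf (K + 2)) : recf (K + 2) :=
  ror (rnot es) (ror (reqn (rpred es) en) (rltb (rpred es) en)).

Section Programs.
Variables (x : bel X) (w : 'I_2 -> nat).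
Local Notation args := (vapp (enc x) w).

Lemma evalr_arg0 : evalr arg0 args (w ord0).
Proof. by apply: evalr_proj; rewrite vapp_rshift. Qed.

Lemma evalr_arg1 : evalr arg1 args (w ord_max).
Proof. by apply: evalr_proj; rewrite vapp_rshift. Qed.

Lemma evalr_rstage e s : evalr e args s -> evalr (rstage e) args (stage_at x s).
Proof.
move=> He; apply: (eComp (ys := vsnoc (enc x) s)); last exact: evalr_stage_prog.
by apply: evalr_fsnoc => // a; apply: evalr_proj; rewrite vapp_lshift.
Qed.

Lemma evalr_rltb ea eb a b :
  evalr ea args a -> evalr eb args b -> evalr (rltb ea eb) args (ltb a b).
Proof.
move=> Ha Hb; apply: (eComp (ys := vpair a b)).
  by do 2 apply: evalr_fcons => //; exact: evalr_fnil.
have [H1 H0] := psi_lt (vpair a b); rewrite vpair0 vpair1 in H1 H0.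
by case: ltbP => [/H1|/H0].
Qed.

Lemma evalr_rstage_le es en s n :
  evalr es args s -> evalr en args n -> evalr (rstage_le es en) args (stage_leb s n).
Proof.
move=> Hs Hn; apply: evalr_ror; first exact: evalr_rnot Hs.
have Hs' := evalr_rpred Hs.
by apply: evalr_ror; [exact: evalr_reqn Hs' Hn | exact: evalr_rltb Hs' Hn].
Qed.

End Programs.

Lemma graph_attained_Sigma1 : Sigma X 1 1 (fun x v => exists s, stage_at x s = (v ord0).+1).
Proof.
apply: (Sigma_succ (Q := fun x w => stage_at x (w ord_max) = (w ord0).+1)); last first.
  by move=> x v; split=> -[s Hs]; exists s; rewrite vsnoc_max vsnoc0 in Hs *.
apply/Sigma0_Pi0/(Sigma0_program (p := reqn (rstage arg1) (rsucc arg0))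
                    (b := fun x w => stage_at x (w ord_max) == (w ord0).+1)) => x w.
  exact: evalr_reqn (evalr_rstage (evalr_arg1 x w)) (evalr_rsucc (evalr_arg0 x w)).
by split => /eqP.
Qed.

Lemma graph_bounded_Pi1 : Pi X 1 1 (fun x v => forall s, stage_le (stage_at x s) (v ord0)).
Proof.
apply: (Pi_succ (Q := fun x w => stage_le (stage_at x (w ord_max)) (w ord0))); last first.
  by move=> x v; split => H s; move: (H s); rewrite vsnoc_max vsnoc0.
apply: (Sigma0_program (p := rstage_le (rstage arg1) arg0)
          (b := fun x w => stage_leb (stage_at x (w ord_max)) (w ord0))) => x w.
  exact: evalr_rstage_le (evalr_rstage (evalr_arg1 x w)) (evalr_arg0 x w).
by split => /stage_lebP.
Qed.

Lemma domain_Sigma2 : Sigma X 2 0 (fun x _ => g x <> None).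
Proof.
pose Q x (w : 'I_2 -> nat) :=
  stage_at x (w ord0) <> 0 /\ stage_le (stage_at x (w ord_max)) (stage_at x (w ord0)).-1.
apply: (Sigma_succ (Q := fun x w => forall s, Q x (vsnoc w s))); last first.
  move=> x v; rewrite domain_stages /Q.
  have E s s' : vsnoc (vsnoc v s) s' ord0 = s /\ vsnoc (vsnoc v s) s' ord_max = s'.
    by rewrite vsnoc_max vsnoc0 vsnoc_nil.
  split=> -[s Hs]; exists s.
    by move=> s'; case: (E s s') => -> ->; case: Hs.
  split=> [|s']; first by case: (E s 0) (Hs 0) => -> _ [].
  by case: (E s s') (Hs s') => -> -> [].
apply: (Pi_succ (Q := Q)) => //.
apply: (Sigma0_program (p := rand (rstage arg0) (rstage_le (rstage arg1) (rpred (rstage arg0))))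
  (b := fun x w => (stage_at x (w ord0) != 0) &&
                   stage_leb (stage_at x (w ord_max)) (stage_at x (w ord0)).-1)) => x w.
  have H0 := evalr_rstage (evalr_arg0 x w).
  exact: evalr_rand H0 (evalr_rstage_le (evalr_rstage (evalr_arg1 x w)) (evalr_rpred H0)).
rewrite /Q; split => [[/eqP ? /stage_lebP ?]|/andP[/eqP ? /stage_lebP ?]] //.
by apply/andP.
Qed.

Lemma max_graph_domain :
  Sigma1_and_Pi1 X 1 (fun x (v : 'I_1 -> nat) => g x = Some (rho (v ord0))) /\
  Sigma X 2 0 (fun x (_ : 'I_0 -> nat) => g x <> None).
Proof.
split; last exact: domain_Sigma2.
exists (fun x v => exists s, stage_at x s = (v ord0).+1),
       (fun x v => forall s, stage_le (stage_at x s) (v ord0)).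
split; [exact: graph_attained_Sigma1 | split; [exact: graph_bounded_Pi1 | move=> x v]].
exact: graph_stages.
Qed.

End MaxGraph.

Lemma MaxPR_graph_domain X D (lt : D -> D -> Prop) rho g :
  computable_poset lt rho -> MaxPR X D lt rho g ->
  Sigma1_and_Pi1 X 1 (fun x (v : 'I_1 -> nat) => g x = Some (rho (v ord0))) /\
  Sigma X 2 0 (fun x (_ : 'I_0 -> nat) => g x <> None).
Proof.
case=> rho_bij lt_po [psi psi_lt] [f [[phi phi_f] [f_mono g_max]]].
exact: (max_graph_domain rho_bij lt_po f_mono g_max phi_f psi_lt).
Qed.

(** * Minimisation as maximisation for the dual order *)

Lemma computable_poset_dual D (lt : D -> D -> Prop) rho :
  computable_poset lt rho -> computable_poset (fun a b => lt b a) rho.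
Proof.
case=> rho_bij [lt_irr lt_trans] [psi psi_lt]; split => //.
  by split => // a b c ab bc; exact: lt_trans bc ab.
exists (rComp psi (fcons (rProj ord_max) (fcons (rProj ord0) (fnil _)))) => v.
have Hargs : forall j, evalr (fcons (rProj ord_max) (fcons (rProj ord0) (fnil _)) j) v
                             (vpair (v ord_max) (v ord0) j).
  by apply: evalr_fcons; [exact: eProj | apply: evalr_fcons; [exact: eProj | exact: evalr_fnil]].
have [H1 H0] := psi_lt (vpair (v ord_max) (v ord0)); rewrite vpair0 vpair1 in H1 H0.
by split => H; apply: eComp Hargs _; [exact: H1 | exact: H0].
Qed.

Lemma MinPR_MaxPR_dual X D (lt : D -> D -> Prop) rho g :
  MinPR X D lt rho g -> MaxPR X D (fun a b => lt b a) rho g.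
Proof.
case=> f [f_pc [f_mono g_min]]; exists f; split => //; split.
  move=> x t t' d d' tt' ft ft'.
  by case: (f_mono x t t' d d' tt' ft ft') => [->|]; [left | right].
move=> x; have [Hdom Hval] := g_min x; split => // d gd.
have [vd Hle] := Hval d gd; split => // e ve.
by case: (Hle e ve) => [->|]; [left | right].
Qed.

Theorem mainTheorem12 (X : seq bcomp) (hX : X <> [::])
  (D : Type) (lt : D -> D -> Prop) (rho : nat -> D)
  (hD : computable_poset lt rho) (g : bel X -> option D) :
  MaxPR X D lt rho g \/ MinPR X D lt rho g ->
  Sigma1_and_Pi1 X 1 (fun x (v : 'I_1 -> nat) => g x = Some (rho (v ord0))) /\
  Sigma X 2 0 (fun x (_ : 'I_0 -> nat) => g x <> None).
Proof.
case=> [Hmax | /MinPR_MaxPR_dual Hmax]; first exact: MaxPR_graph_domain hD Hmax.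
exact: MaxPR_graph_domain (computable_poset_dual hD) Hmax.
Qed.
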